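(* Let $(M,J,g,\nabla)$ be an affine special $\epsilon$-K\''ahler manifold of real dimension $2n$, let $U\subset M$ be a connected open subset and $\phi:U\to V=\mathbb{C}_\epsilon^{2n}$ an $\epsilon$-K\''ahlerian Lagrangian immersion inducing the special geometric data on $U$, such that $\tilde z^i=z^i\circ\phi$, $i=1,\dots,n$, form a system of holomorphic coordinates on $U$ (special holomorphic coordinates) with image $\tilde U\subset\mathbb{C}_\epsilon^n$, and let $F:\tilde U\to\mathbb{C}_\epsilon$ be a holomorphic prepotential, i.e. $\phi(U)=\{(z,w)\in\mathbb{C}_\epsilon^{2n}: z\in\tilde U,\ w_i=\partial F/\partial z^i(z),\ i=1,\dots,n\}$ ($F$ is determined up to an additive constant). Then $F$ can be chosen homogeneous of degree $2$ if and only if the special holomorphic coordinates are conical, i.e. if and only if $\phi$ is conical.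
   Context: Let $\epsilon\in\{-1,1\}$, $\mathbb{C}_\epsilon=\mathbb{R}[i_\epsilon]$, $i_\epsilon^2=\epsilon$, conjugation $\overline{a+i_\epsilon b}=a-i_\epsilon b$. An $\epsilon$-K\''ahler manifold $(M,J,g)$ is pseudo-Riemannian with parallel $g$-skew $J$, $J^2=\epsilon\mathrm{Id}$, K\''ahler form $\omega=\epsilon g(J\cdot,\cdot)$; affine special means there is a flat torsion-free $\nabla$ with $\nabla\omega=0$, $(\nabla_XJ)Y=(\nabla_YJ)X$. A function is ($\epsilon$-)holomorphic if $df\,J=i_\epsilon df$. On $V=\mathbb{C}_\epsilon^{2n}$ take coordinates $(z^i,w_i)$, $\Omega=\sum dz^i\wedge dw_i$, $\gamma=i_\epsilon\Omega(\cdot,\bar\cdot)$; a holomorphic immersion $\phi$ is $\epsilon$-K\''ahlerian if $\phi^*\gamma$ is nondegenerate, Lagrangian if $\phi^*\Omega=0$; it induces $g=\phi^*\mathrm{Re}\,\gamma$ and the flat connection $\nabla$ having $(\mathrm{Re}\,z^i\circ\phi,\mathrm{Re}\,w_i\circ\phi)$ as affine coordinates. $\phi$ is conical if the position vector field $\xi^V_p=p$ of $V$ is tangent along $\phi$, i.e. $\xi^V_{\phi(p)}\in d\phi_pT_pU$ for all $p$. A function $F$ on $\tilde U$ is homogeneous of degree $k$ if for every $z\in\tilde U$ there is a neighbourhood $W\subset\mathbb{C}_\epsilon$ of $1$ with $\lambda z\in\tilde U$ and $F(\lambda z)=\lambda^kF(z)$ for all $\lambda\in W$. *)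

From HB Require Import structures.
From mathcomp Require Import all_boot all_order all_algebra.
From mathcomp Require Import all_classical all_reals all_analysis.
Set Implicit Arguments. Unset Strict Implicit. Unset Printing Implicit Defensive.
Import Order.TTheory GRing.Theory Num.Theory.
Import numFieldNormedType.Exports.
Local Open Scope classical_set_scope.
Local Open Scope ring_scope.

(* eps-complex numbers C_eps = R[i_eps], i_eps^2 = eps, represented as pairs
   (a, b) standing for a + i_eps b. *)
Definition Ce (R : realType) := (R * R)%type.

Section Ceps.
Variables (R : realType) (eps : R).

Definition ce_mul (l m : Ce R) : Ce R :=
  (l.1 * m.1 + eps * (l.2 * m.2), l.1 * m.2 + l.2 * m.1).
Definition ce_add (l m : Ce R) : Ce R := (l.1 + m.1, l.2 + m.2).
Definition ce_sub (l m : Ce R) : Ce R := (l.1 - m.1, l.2 - m.2).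
Definition ce_conj (l : Ce R) : Ce R := (l.1, - l.2).
Definition ce_one : Ce R := (1, 0).
Definition ce_i : Ce R := (0, 1).
Definition ce_exp (l : Ce R) (k : nat) : Ce R := iter k (ce_mul l) ce_one.

(* C_eps^n, represented as (real parts, i_eps-parts) *)
Definition Cn (n : nat) := ('rV[R]_n * 'rV[R]_n)%type.

Definition coord {n} (i : 'I_n) (z : Cn n) : Ce R := (z.1 0 i, z.2 0 i).
Definition ebasis {n} (i : 'I_n) : Cn n := (delta_mx 0 i, 0).
Definition ce_smul {n} (l : Ce R) (z : Cn n) : Cn n :=
  (l.1 *: z.1 + (eps * l.2) *: z.2, l.1 *: z.2 + l.2 *: z.1).
Definition J1 (l : Ce R) : Ce R := ce_mul ce_i l.
Definition Jn {n} (z : Cn n) : Cn n := ce_smul ce_i z.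
Definition JV {n} (p : Cn n * Cn n) : Cn n * Cn n := (Jn p.1, Jn p.2).
Definition ce_sum {n} (f : 'I_n -> Ce R) : Ce R :=
  (\sum_(i < n) (f i).1, \sum_(i < n) (f i).2).

(* f is (eps-)holomorphic on U: real differentiable with C_eps-linear
   differential (df J = J df), for given complex structures on source/target *)
Definition holomorphic_on {A B : normedModType R} (JA : A -> A) (JB : B -> B)
  (U : set A) (f : A -> B) : Prop :=
  forall z, U z -> differentiable f z /\ forall v, 'd f z (JA v) = JB ('d f z v).

(* V = C_eps^{2n} with coordinates (z^i, w_i):
   Omega = sum dz^i /\ dw_i, gamma = i_eps Omega(., conj .) *)
Definition Omega {n} (p q : Cn n * Cn n) : Ce R :=
  ce_sum (fun i => ce_sub (ce_mul (coord i p.1) (coord i q.2))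
                          (ce_mul (coord i p.2) (coord i q.1))).
Definition conjV {n} (p : Cn n * Cn n) : Cn n * Cn n :=
  ((p.1.1, - p.1.2), (p.2.1, - p.2.2)).
Definition gamma {n} (p q : Cn n * Cn n) : Ce R := ce_mul ce_i (Omega p (conjV q)).

(* the map z |-> (z, w(z)), i.e. phi expressed in the special holomorphic
   coordinates z = z o phi *)
Definition graph {n} (w : Cn n -> Cn n) (z : Cn n) : Cn n * Cn n := (z, w z).

Definition holomorphic_immersion {n} (U : set (Cn n)) (phi : Cn n -> Cn n * Cn n) :=
  holomorphic_on Jn JV U phi /\ forall z, U z -> injective ('d phi z).
Definition eps_Kaehlerian {n} (U : set (Cn n)) (phi : Cn n -> Cn n * Cn n) :=
  forall z, U z -> forall u,
    (forall v, gamma ('d phi z u) ('d phi z v) = (0, 0)) -> u = 0.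
Definition Lagrangian {n} (U : set (Cn n)) (phi : Cn n -> Cn n * Cn n) :=
  forall z, U z -> forall u v, Omega ('d phi z u) ('d phi z v) = (0, 0).
(* conical: the position vector field xi^V_{phi(p)} = phi(p) lies in d phi_p T_p U *)
Definition conical {n} (U : set (Cn n)) (phi : Cn n -> Cn n * Cn n) :=
  forall z, U z -> exists v, 'd phi z v = phi z.

(* F is a prepotential for phi = graph w on U: w_i = dF/dz^i (the complex
   partial derivative of a holomorphic F equals dF(e_i)) *)
Definition prepotential {n} (U : set (Cn n)) (w : Cn n -> Cn n) (F : Cn n -> Ce R) :=
  holomorphic_on Jn J1 U F /\
  forall z, U z -> forall i, 'd F z (ebasis i) = coord i (w z).

Definition homogeneous {n} (U : set (Cn n)) (k : nat) (F : Cn n -> Ce R) :=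
  forall z, U z -> exists W : set (Ce R), nbhs ce_one W /\
    forall l, W l -> U (ce_smul l z) /\ F (ce_smul l z) = ce_mul (ce_exp l k) (F z).

End Ceps.

From Pilot Require Import Defs.
From HB Require Import structures.
From mathcomp Require Import all_boot all_order all_algebra.
From mathcomp Require Import all_classical all_reals all_analysis.
Import Order.TTheory GRing.Theory Num.Theory.
Import numFieldNormedType.Exports.
Local Open Scope classical_set_scope.
Local Open Scope ring_scope.
From mathcomp Require Import ring lra.
Import Defs.

(* Write <u, x> = sum_i u^i x_i ([cdot u x]) for the C_eps-bilinear pairing on C_eps^n, so
   that Omega((u, x), (v, y)) = <u, y> - <x, v>.  Along the graph of w the Lagrangian condition
   says exactly that dw is <,>-symmetric, hence the derivative of G(z) = <z, w(z)> ([zdotw w])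
   in the direction e_j is w_j(z) + (dw_z z)_j.  For a prepotential F, C_eps-linearity of dF
   gives Euler's relation dF_z z = G(z).
   If F is homogeneous of degree 2 then dF_z z = 2 F(z), so 2F = G near z; differentiating
   along e_j gives dw_z z = w(z), i.e. the position vector (z, w(z)) is d phi_z z.
   Conversely, if dw_z z = w(z) then F = G/2 is a prepotential, and w is homogeneous of
   degree 1 because t |-> lambda_t^-1 w(lambda_t z) has zero derivative along the segment
   lambda_t = 1 + t (lambda - 1); hence F is homogeneous of degree 2. *)
Set Implicit Arguments. Unset Strict Implicit. Unset Printing Implicit Defensive.

Section DirectionalDerivatives.
Variable R : realType.

Lemma differentiable_linear_comp (V W X : normedModType R) (L : W -> X) (f : V -> W) x :
  linear L -> continuous L -> differentiable f x ->
  differentiable (L \o f) x /\ forall v, 'd (L \o f) x v = L ('d f x v).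
Proof.
move=> lL cL df.
pose LL : {linear W -> X} := HB.pack L (GRing.isLinear.Build _ _ _ _ _ lL).
have dL : differentiable LL (f x) by exact: linear_differentiable.
split; first exact: differentiable_comp.
by move=> v; rewrite diff_comp //= -[L]/(LL : W -> X) diff_lin.
Qed.

Lemma is_derive_diff (V W : normedModType R) (f : V -> W) (x v : V) :
  differentiable f x -> is_derive x v f ('d f x v).
Proof. move=> d; apply: DeriveDef; [exact: diff_derivable | exact: deriveE]. Qed.

Lemma is_derive_unique (V W : normedModType R) (f : V -> W) (x v : V) (a b : W) :
  is_derive x v f a -> is_derive x v f b -> a = b.
Proof. by case=> _ <-; case=> _ <-. Qed.

Lemma is_derive_line (V W : normedModType R) (f : V -> W) (x v : V) (t : R) :
  differentiable f (t *: v + x) ->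
  is_derive t (1:R) (fun h : R => f (h *: v + x)) ('d f (t *: v + x) v).
Proof.
move=> df; pose line := ( *:%R^~ v : R -> V) + cst x.
have hd : is_diff t line (( *:%R^~ v : R -> V) + 0) by exact: is_diffD.
have dline : differentiable line t by exact: ex_diff.
have dlineE : 'd line t 1 = v by rewrite diff_val /= addr0 scale1r.
have dfl : differentiable (f \o line) t by exact: differentiable_comp.
apply: DeriveDef; first exact: diff_derivable.
by rewrite deriveE // diff_comp //= dlineE.
Qed.

Lemma is_derive_mul (V : normedModType R) (f g : V -> R) (t v : V) (df dg : R) :
  is_derive t v f df -> is_derive t v g dg ->
  is_derive t v (fun s => f s * g s) (f t * dg + g t * df).
Proof.
case=> d1 <-; case=> d2 <-; rewrite -[fun s => _]/(f * g).
apply: DeriveDef; [exact: derivableM | by rewrite deriveM].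
Qed.

Lemma is_derive_add (V : normedModType R) (f g : V -> R) (t v : V) (df dg : R) :
  is_derive t v f df -> is_derive t v g dg ->
  is_derive t v (fun s => f s + g s) (df + dg).
Proof. by move=> hf hg; exact: (is_deriveD (f := f) (g := g)). Qed.

Lemma is_derive_sub (V : normedModType R) (f g : V -> R) (t v : V) (df dg : R) :
  is_derive t v f df -> is_derive t v g dg ->
  is_derive t v (fun s => f s - g s) (df - dg).
Proof. by move=> hf hg; exact: (is_deriveB (f := f) (g := g)). Qed.

Lemma is_derive_scale (V : normedModType R) (f : V -> R) (k : R) (t v : V) (df : R) :
  is_derive t v f df -> is_derive t v (fun s => k * f s) (k * df).
Proof. by move=> hf; exact: (is_deriveZ (f := f) k). Qed.

Lemma is_derive_bigsum (V : normedModType R) m (h : 'I_m -> V -> R) (t v : V)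
    (dh : 'I_m -> R) :
  (forall i, is_derive t v (h i) (dh i)) ->
  is_derive t v (fun s => \sum_(i < m) h i s) (\sum_(i < m) dh i).
Proof.
move=> H; have -> : (fun s => \sum_(i < m) h i s) = \sum_(i < m) h i.
  by apply/funext => s; rewrite fct_sumE.
exact: is_derive_sum.
Qed.

Lemma is_derive_affine (a b t : R) : is_derive t (1:R) (fun s : R => a + s * b) b.
Proof.
have := is_derive_add (is_derive_cst a t 1) (is_derive_mul (is_derive_id t 1) (is_derive_cst b t 1)).
by rewrite mulr0 mulr1 !add0r.
Qed.

Lemma is_derive0_segment (g : R -> R) :
  (forall t : R, 0 <= t <= 1 -> is_derive t (1:R) g 0) -> g 1 = g 0.
Proof.
move=> Hg.
have H1 : forall x : R, x \in `]0, 1[ -> is_derive x (1:R) g ((fun _ => 0) x).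
  by move=> x; rewrite in_itv /= => /andP [a b]; apply: Hg; rewrite (ltW a) (ltW b).
have H2 : {within `[(0:R), 1], continuous g}.
  apply: continuous_in_subspaceT => x; rewrite inE /= in_itv /= => xin.
  have [dd _] := Hg x xin.
  exact/differentiable_continuous/derivable1_diffP.
have [x _ E] := MVT_segment ler01 H1 H2.
by apply/eqP; rewrite -subr_eq0 E mul0r.
Qed.

Lemma diff_idE (V : normedModType R) (x v : V) :
  differentiable (@id V) x /\ 'd (@id V) x v = v.
Proof. by have [d ->] : is_diff x (@id V) (@id V) by exact: is_diff_id. Qed.

Lemma diff_graph_map (V W : normedModType R) (w : V -> W) (z : V) :
  differentiable (fun y => (y, w y)) z ->
  differentiable w z /\ forall v, 'd (fun y => (y, w y)) z v = (v, 'd w z v).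
Proof.
move=> dg.
have fst_cont : continuous (@fst V W) by move=> [? ?]; exact: cvg_fst.
have snd_cont : continuous (@snd V W) by move=> [? ?]; exact: cvg_snd.
have [dw dwE] := differentiable_linear_comp (fun _ _ _ => erefl) snd_cont dg.
have [_ didE] := differentiable_linear_comp (fun _ _ _ => erefl) fst_cont dg.
split => // v; rewrite [LHS]surjective_pairing -dwE -didE.
by have [_ ->] := diff_idE z v.
Qed.

End DirectionalDerivatives.

Lemma fst_sum (U V : zmodType) m (F : 'I_m -> U * V) :
  (\sum_(i < m) F i).1 = \sum_(i < m) (F i).1.
Proof. by elim/big_rec2: _ => //= i a b _ ->. Qed.

Lemma snd_sum (U V : zmodType) m (F : 'I_m -> U * V) :
  (\sum_(i < m) F i).2 = \sum_(i < m) (F i).2.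
Proof. by elim/big_rec2: _ => //= i a b _ ->. Qed.

Section EpsComplexCoordinates.
Variables (R : realType) (eps : R) (n : nat).
Implicit Types (i j : 'I_n) (u v x y : Cn R n) (a b l : Ce R).

Definition re_coord (i : 'I_n) u : R := u.1 0 i.
Definition im_coord (i : 'I_n) u : R := u.2 0 i.

Lemma coordE i u : coord i u = (re_coord i u, im_coord i u).
Proof. by []. Qed.

Lemma coord_inj u v : (forall i, coord i u = coord i v) -> u = v.
Proof.
move=> E; rewrite [u]surjective_pairing [v]surjective_pairing.
by congr pair; apply/rowP => i; case: (E i).
Qed.

Lemma ce_addE a b : a + b = (a.1 + b.1, a.2 + b.2).
Proof. by []. Qed.

Lemma ce_scaleE (k : R) a : k *: a = (k * a.1, k * a.2).
Proof. by []. Qed.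

Lemma re_coord_linear i : linear (re_coord i : Cn R n -> R^o).
Proof. by move=> k u v; rewrite /re_coord /= !mxE. Qed.

Lemma im_coord_linear i : linear (im_coord i : Cn R n -> R^o).
Proof. by move=> k u v; rewrite /im_coord /= !mxE. Qed.

Lemma re_coord_continuous i : continuous (re_coord i : Cn R n -> R^o).
Proof.
move=> u; apply: (@continuous_comp _ _ _ fst (fun r : 'rV[R]_n => r 0 i)).
  exact: cvg_fst.
exact: coord_continuous.
Qed.

Lemma im_coord_continuous i : continuous (im_coord i : Cn R n -> R^o).
Proof.
move=> u; apply: (@continuous_comp _ _ _ snd (fun r : 'rV[R]_n => r 0 i)).
  exact: cvg_snd.
exact: coord_continuous.
Qed.

Lemma diff_re_coord (V : normedModType R) (f : V -> Cn R n) (x : V) i :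
  differentiable f x -> differentiable (re_coord i \o f) x /\
  forall h : V, 'd (re_coord i \o f) x h = re_coord i ('d f x h).
Proof. exact: differentiable_linear_comp (re_coord_linear i) (@re_coord_continuous i). Qed.

Lemma diff_im_coord (V : normedModType R) (f : V -> Cn R n) (x : V) i :
  differentiable f x -> differentiable (im_coord i \o f) x /\
  forall h : V, 'd (im_coord i \o f) x h = im_coord i ('d f x h).
Proof. exact: differentiable_linear_comp (im_coord_linear i) (@im_coord_continuous i). Qed.

Lemma is_derive_re_coord (V : normedModType R) (f : V -> Cn R n) (x v : V) i :
  differentiable f x -> is_derive x v (fun s => re_coord i (f s)) (re_coord i ('d f x v)).
Proof. by move=> /(diff_re_coord i) [d <-]; exact: is_derive_diff. Qed.

Lemma is_derive_im_coord (V : normedModType R) (f : V -> Cn R n) (x v : V) i :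
  differentiable f x -> is_derive x v (fun s => im_coord i (f s)) (im_coord i ('d f x v)).
Proof. by move=> /(diff_im_coord i) [d <-]; exact: is_derive_diff. Qed.

Lemma coordD i u v : coord i (u + v) = coord i u + coord i v.
Proof. by rewrite !coordE /re_coord /im_coord /= !mxE. Qed.

Lemma coordZ i (k : R) u : coord i (k *: u) = k *: coord i u.
Proof. by rewrite !coordE /re_coord /im_coord /= !mxE. Qed.

Lemma coord_smul (i : 'I_n) l u : coord i (ce_smul eps l u) = ce_mul eps l (coord i u).
Proof. by rewrite /coord /ce_smul /ce_mul /= !mxE mulrA. Qed.

Lemma coord_ebasis i j : coord i (ebasis R j) = ((i == j)%:R, 0).
Proof. by rewrite /coord /ebasis /= !mxE eqxx. Qed.

Lemma ce_smul_re_im l u : ce_smul eps l u = l.1 *: u + l.2 *: Jn eps u.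
Proof.
rewrite /ce_smul /Jn /ce_i /=; congr pair; apply/rowP => k; rewrite !mxE /=; ring.
Qed.

Lemma Cn_decomp y :
  y = \sum_(i < n) (re_coord i y *: ebasis R i + im_coord i y *: Jn eps (ebasis R i)).
Proof.
have Jn_ebasis i : Jn eps (ebasis R i) = (0, delta_mx 0 i).
  by rewrite /Jn /ce_smul /ebasis /ce_i /= !scale0r scaler0 !add0r scale1r.
case: y => y1 y2; rewrite [RHS]surjective_pairing; congr pair.
  rewrite fst_sum [LHS]row_sum_delta; apply: eq_bigr => i _.
  by rewrite Jn_ebasis /= scaler0 addr0.
rewrite snd_sum [LHS]row_sum_delta; apply: eq_bigr => i _.
by rewrite Jn_ebasis /= scaler0 add0r.
Qed.

Lemma J1_linear_expand (A : {linear Cn R n -> Ce R}) :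
  (forall v, A (Jn eps v) = J1 eps (A v)) ->
  forall y, A y = ce_sum (fun i => ce_mul eps (coord i y) (A (ebasis R i))).
Proof.
move=> AJ y; rewrite {1}(Cn_decomp y) linear_sum [LHS]surjective_pairing fst_sum snd_sum.
by congr pair; apply: eq_bigr => i _;
  rewrite linearD !linearZZ AJ ce_addE !ce_scaleE /J1 /ce_mul /re_coord /im_coord /=; ring.
Qed.

Lemma Jn_linear_smul (A : {linear Cn R n -> Cn R n}) :
  (forall v, A (Jn eps v) = Jn eps (A v)) ->
  forall l u, A (ce_smul eps l u) = ce_smul eps l (A u).
Proof. by move=> AJ l u; rewrite !ce_smul_re_im linearD !linearZZ AJ. Qed.

Definition cdot u x : Ce R := ce_sum (fun i => ce_mul eps (coord i u) (coord i x)).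

Lemma cdotC u x : cdot u x = cdot x u.
Proof. by rewrite /cdot /ce_sum /=; congr pair; apply: eq_bigr => i _; ring. Qed.

Lemma cdot_ebasisl j x : cdot (ebasis R j) x = coord j x.
Proof.
have delta (f : 'I_n -> R) : \sum_(i < n) (i == j)%:R * f i = f j.
  rewrite (bigD1 j) //= eqxx mul1r big1 ?addr0 // => i /negbTE ->; exact: mul0r.
rewrite /cdot /ce_sum coordE; congr pair.
  apply: (eq_trans _ (delta (re_coord ^~ x))).
  by apply: eq_bigr => i _; rewrite coord_ebasis /re_coord /=; ring.
apply: (eq_trans _ (delta (im_coord ^~ x))).
by apply: eq_bigr => i _; rewrite coord_ebasis /im_coord /=; ring.
Qed.

Lemma cdotJl u x : cdot (Jn eps u) x = J1 eps (cdot u x).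
Proof.
rewrite /cdot /ce_sum /J1 /Jn /ce_smul /ce_mul /coord /=; congr pair;
  by rewrite !mulr_sumr -big_split /=; apply: eq_bigr => i _; rewrite !mxE /=; ring.
Qed.

Lemma cdotJr u x : cdot u (Jn eps x) = J1 eps (cdot u x).
Proof. by rewrite cdotC cdotJl cdotC. Qed.

Lemma cdot_smul l u x :
  cdot (ce_smul eps l u) (ce_smul eps l x) = ce_mul eps (ce_exp eps l 2) (cdot u x).
Proof.
rewrite /cdot /ce_sum /ce_exp /ce_smul /ce_mul /coord /=; congr pair;
  by rewrite !mulr_sumr -?big_split /=; apply: eq_bigr => i _; rewrite !mxE /=; ring.
Qed.

Lemma Omega_eq0_cdot u x v y : Omega eps (u, x) (v, y) = (0, 0) -> cdot u y = cdot v x.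
Proof.
rewrite /Omega /cdot /ce_sum /ce_sub /ce_mul /= => -[E1 E2].
congr pair; apply/eqP; rewrite -subr_eq0 -sumrB; apply/eqP.
  by rewrite -[RHS]E1; apply: eq_bigr => i _; ring.
by rewrite -[RHS]E2; apply: eq_bigr => i _; ring.
Qed.

End EpsComplexCoordinates.

Section GraphOfTheDualCoordinates.
Variables (R : realType) (eps : R) (n : nat).
Implicit Types (Ut : set (Cn R n)) (w : Cn R n -> Cn R n) (i j : 'I_n).

Lemma holomorphic_graph_diff Ut w z :
  holomorphic_immersion eps Ut (graph w) -> Ut z ->
  [/\ differentiable w z, (forall v, 'd (graph w) z v = (v, 'd w z v)) &
      forall v, 'd w z (Jn eps v) = Jn eps ('d w z v)].
Proof.
move=> [Hh _] Uz; have [dg HJ] := Hh z Uz; have [dw Eg] := diff_graph_map dg.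
by split => // v; have := HJ v; rewrite !Eg /JV => -[].
Qed.

Lemma Lagrangian_graph_cdot Ut w z :
  holomorphic_immersion eps Ut (graph w) -> Lagrangian eps Ut (graph w) -> Ut z ->
  forall u v, cdot eps u ('d w z v) = cdot eps v ('d w z u).
Proof.
move=> Hi HL Uz u v; have [_ Eg _] := holomorphic_graph_diff Hi Uz.
by apply: Omega_eq0_cdot; rewrite -!Eg; exact: HL.
Qed.

Definition zdotw w (y : Cn R n) : Ce R := cdot eps y (w y).

Let zdotw_re w y := \sum_(i < n)
  (re_coord i y * re_coord i (w y) + eps * (im_coord i y * im_coord i (w y))).
Let zdotw_im w y := \sum_(i < n)
  (re_coord i y * im_coord i (w y) + im_coord i y * re_coord i (w y)).

Lemma zdotwE w : zdotw w = fun y => (zdotw_re w y, zdotw_im w y).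
Proof. by []. Qed.

Lemma is_derive_zdotw_re w z v : differentiable w z ->
  is_derive z v (zdotw_re w) (\sum_(i < n)
    ((re_coord i z * re_coord i ('d w z v) + re_coord i (w z) * re_coord i v)
    + eps * (im_coord i z * im_coord i ('d w z v) + im_coord i (w z) * im_coord i v))).
Proof.
move=> dw; have [did didE] := diff_idE z v.
apply: is_derive_bigsum => i; apply: is_derive_add; last apply: is_derive_scale;
  apply: is_derive_mul.
- by have := is_derive_re_coord v i did; rewrite didE.
- exact: is_derive_re_coord.
- by have := is_derive_im_coord v i did; rewrite didE.
- exact: is_derive_im_coord.
Qed.

Lemma is_derive_zdotw_im w z v : differentiable w z ->
  is_derive z v (zdotw_im w) (\sum_(i < n)
    ((re_coord i z * im_coord i ('d w z v) + im_coord i (w z) * re_coord i v)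
    + (im_coord i z * re_coord i ('d w z v) + re_coord i (w z) * im_coord i v))).
Proof.
move=> dw; have [did didE] := diff_idE z v.
apply: is_derive_bigsum => i; apply: is_derive_add; apply: is_derive_mul.
- by have := is_derive_re_coord v i did; rewrite didE.
- exact: is_derive_im_coord.
- by have := is_derive_im_coord v i did; rewrite didE.
- exact: is_derive_re_coord.
Qed.

Lemma differentiable_zdotw w z : differentiable w z ->
  differentiable (zdotw_re w) z /\ differentiable (zdotw_im w) z.
Proof.
move=> dw; have [did _] := diff_idE z z.
have dre1 i := (diff_re_coord i did).1; have dim1 i := (diff_im_coord i did).1.
have dre2 i := (diff_re_coord i dw).1; have dim2 i := (diff_im_coord i dw).1.
split.
  have -> : zdotw_re w = \sum_(i < n) ((re_coord i \o id) * (re_coord i \o w)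
      + eps \*: ((im_coord i \o id) * (im_coord i \o w))).
    by apply/funext => y; rewrite /zdotw_re fct_sumE; apply: eq_bigr.
  apply: differentiable_sum => i; apply: differentiableD; last apply: differentiableZ;
    exact: differentiableM.
have -> : zdotw_im w = \sum_(i < n) ((re_coord i \o id) * (im_coord i \o w)
    + (im_coord i \o id) * (re_coord i \o w)).
  by apply/funext => y; rewrite /zdotw_im fct_sumE; apply: eq_bigr.
by apply: differentiable_sum => i; apply: differentiableD; exact: differentiableM.
Qed.

Lemma diff_zdotw w z : differentiable w z ->
  differentiable (zdotw w) z /\
  forall v, 'd (zdotw w) z v = cdot eps v (w z) + cdot eps z ('d w z v).
Proof.
move=> dw; have [d1 d2] := differentiable_zdotw dw; rewrite zdotwE.
split; first exact: differentiable_pair.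
move=> v; rewrite diff_pair // ce_addE; congr pair.
  rewrite (is_derive_unique (is_derive_diff v d1) (is_derive_zdotw_re v dw)).
  by rewrite /cdot /ce_sum /= -big_split /=; apply: eq_bigr => i _; rewrite /re_coord /im_coord; ring.
rewrite (is_derive_unique (is_derive_diff v d2) (is_derive_zdotw_im v dw)).
by rewrite /cdot /ce_sum /= -big_split /=; apply: eq_bigr => i _; rewrite /re_coord /im_coord; ring.
Qed.

End GraphOfTheDualCoordinates.

Section PrepotentialsAndConicality.
Variables (R : realType) (eps : R) (n : nat).
Implicit Types (Ut : set (Cn R n)) (w : Cn R n -> Cn R n) (F : Cn R n -> Ce R).

Lemma prepotential_euler Ut w F y :
  prepotential eps Ut w F -> Ut y -> 'd F y y = zdotw eps w y.
Proof.
move=> [HF HFe] Uy; have [_ HJ] := HF y Uy.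
rewrite (J1_linear_expand HJ y) /zdotw /cdot; congr ce_sum.
by apply/funext => i; rewrite HFe.
Qed.

Lemma homogeneous2_euler_proj (p : Ce R -> R^o) Ut F y :
  linear p -> continuous p ->
  (forall h a, p (ce_mul eps (ce_exp eps (1 + h * 1, 0) 2) a) = (1 + h * 1) * (1 + h * 1) * p a) ->
  differentiable F y -> homogeneous eps Ut 2 F -> Ut y ->
  p ('d F y y) = 2 * p (F y).
Proof.
move=> pl pc Hp dF Hh Uy; have [W [HW HWh]] := Hh y Uy.
have [dg Eg] := differentiable_linear_comp pl pc dF.
have dg' : differentiable (p \o F) (0 *: y + y) by rewrite scale0r add0r.
have := is_derive_line dg'; rewrite scale0r add0r Eg => L.
have line_to_one : (fun h : R => (1 + h * 1, (0:R))) @ (0:R) --> ((1:R), (0:R)).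
  have -> : ((1:R), (0:R)) = (1 + 0 * 1, 0) by rewrite mul0r addr0.
  have H1 : (fun h : R => 1 + h * 1) @ (0:R) --> (1 + 0 * 1 : R).
    by apply: cvgD; [exact: cvg_cst | apply: cvgM; [exact: cvg_id | exact: cvg_cst]].
  exact: (cvg_pair H1 (cvg_cst (0:R))).
have Hn : \forall h \near (0:R), (1 + h * 1) * (1 + h * 1) * p (F y) = (p \o F) (h *: y + y).
  near=> h; have Wh : W (1 + h * 1, 0) by near: h; exact: line_to_one.
  have [_ E] := HWh _ Wh.
  have -> : h *: y + y = ce_smul eps (1 + h * 1, 0) y.
    apply: coord_inj => k; rewrite coordD coordZ coord_smul ce_addE ce_scaleE.
    by rewrite /ce_mul /coord /=; congr pair; ring.
  by rewrite /= E Hp.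
have sq := is_derive_mul (is_derive_mul (is_derive_affine 1 1 0) (is_derive_affine 1 1 0))
  (is_derive_cst (p (F y)) (0:R) (1:R)).
rewrite (is_derive_unique L (near_eq_is_derive Hn sq)) /=; ring.
Unshelve. all: by end_near.
Qed.

Lemma homogeneous2_euler Ut F y :
  differentiable F y -> homogeneous eps Ut 2 F -> Ut y -> 'd F y y = 2 *: F y.
Proof.
move=> dF Hh Uy; rewrite [LHS]surjective_pairing ce_scaleE; congr pair.
  apply: (@homogeneous2_euler_proj fst Ut) => //; first by move=> [? ?]; exact: cvg_fst.
  by move=> h a; rewrite /ce_mul /ce_exp /ce_one /=; ring.
apply: (@homogeneous2_euler_proj snd Ut) => //; first by move=> [? ?]; exact: cvg_snd.
by move=> h a; rewrite /ce_mul /ce_exp /ce_one /=; ring.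
Qed.

Lemma diff_zdotw_ebasis Ut w z j :
  holomorphic_immersion eps Ut (graph w) -> Lagrangian eps Ut (graph w) -> Ut z ->
  'd (zdotw eps w) z (ebasis R j) = coord j (w z) + coord j ('d w z z).
Proof.
move=> Hi HL Uz; have [dw _ _] := holomorphic_graph_diff Hi Uz.
by rewrite (diff_zdotw _ dw).2 cdot_ebasisl (Lagrangian_graph_cdot Hi HL Uz) cdot_ebasisl.
Qed.

Lemma conical_of_homogeneous_prepotential Ut w F :
  open Ut -> holomorphic_immersion eps Ut (graph w) -> Lagrangian eps Ut (graph w) ->
  prepotential eps Ut w F -> homogeneous eps Ut 2 F -> conical Ut (graph w).
Proof.
move=> oU Hi HL HP Hh z Uz.
have [dw Eg _] := holomorphic_graph_diff Hi Uz.
have [dF _] := HP.1 z Uz.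
have twoF : \forall y \near z, zdotw eps w y = (2 *: F) y.
  apply: filterS (open_nbhs_nbhs (conj oU Uz)) => y Uy.
  by rewrite -(prepotential_euler HP Uy) (homogeneous2_euler (HP.1 y Uy).1 Hh Uy).
exists z; rewrite Eg; congr pair; apply: coord_inj => j.
have E : coord j (w z) + coord j ('d w z z) = 2 *: coord j (w z).
  rewrite -(diff_zdotw_ebasis _ Hi HL Uz) -HP.2 //.
  exact: is_derive_unique (near_eq_is_derive twoF (is_derive_diff _ (diff_zdotw eps dw).1))
    (is_deriveZ (f := F) 2 (is_derive_diff _ dF)).
by apply: (addrI (coord j (w z))); rewrite E scaler_nat mulr2n.
Qed.

End PrepotentialsAndConicality.

Section HomogeneityOfTheDualCoordinates.
Variables (R : realType) (eps : R) (n : nat).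
Hypothesis eps_unit : eps = 1 \/ eps = -1.
Implicit Types (z : Cn R n) (w : Cn R n -> Cn R n) (l : Ce R) (j : 'I_n).

Lemma re_coord_smul l z j : re_coord j (ce_smul eps l z) = l.1 * re_coord j z + eps * l.2 * im_coord j z.
Proof. by rewrite /re_coord /im_coord /ce_smul /= !mxE. Qed.

Lemma im_coord_smul l z j : im_coord j (ce_smul eps l z) = l.1 * im_coord j z + l.2 * re_coord j z.
Proof. by rewrite /re_coord /im_coord /ce_smul /= !mxE. Qed.

Lemma ce_smul_one z : ce_smul eps (ce_one R) z = z.
Proof.
case: z => z1 z2; rewrite /ce_smul /ce_one /=; congr pair; apply/rowP => k; rewrite !mxE /=; ring.
Qed.

Lemma ce_smul_segment (t a b : R) z :
  ce_smul eps (1 + t * a, 0 + t * b) z = t *: ce_smul eps (a, b) z + z.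
Proof.
case: z => z1 z2; rewrite /ce_smul /=; congr pair; apply/rowP => k; rewrite !mxE /=; ring.
Qed.

Lemma continuous_ce_smul z : continuous (fun l : Ce R => ce_smul eps l z).
Proof.
move=> l0.
have f1 : (fun l : Ce R => l.1) @ l0 --> l0.1 by case: l0 => a b; exact: cvg_fst.
have f2 : (fun l : Ce R => l.2) @ l0 --> l0.2 by clear f1; case: l0 => a b; exact: cvg_snd.
have f3 : (fun l : Ce R => eps * l.2) @ l0 --> eps * l0.2 by apply: cvgM => //; exact: cvg_cst.
have H1 : (fun l : Ce R => l.1 *: z.1 + (eps * l.2) *: z.2) @ l0 --> l0.1 *: z.1 + (eps * l0.2) *: z.2.
  by apply: cvgD; apply: cvgZr_tmp.
have H2 : (fun l : Ce R => l.1 *: z.2 + l.2 *: z.1) @ l0 --> l0.1 *: z.2 + l0.2 *: z.1.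
  by apply: cvgD; apply: cvgZr_tmp.
exact: (cvg_pair H1 H2).
Qed.

Lemma ball_ce_oneP l d : ball (ce_one R) d l <-> `|1 - l.1| < d /\ `|0 - l.2| < d.
Proof.
rewrite -ball_normE /ball_ /= prod_normE /= gt_max.
by split => [/andP [] | [-> ->]].
Qed.

Lemma ce_norm_gt0 l : ball (ce_one R) (1/2) l -> 0 < l.1 * l.1 - eps * (l.2 * l.2).
Proof.
move=> /ball_ce_oneP [h1 h2]; move: h1 h2; rewrite !ltr_norml => /andP [a1 a2] /andP [b1 b2].
by case: eps_unit => ->; nra.
Qed.

Lemma ball_ce_one_segment l d (t : R) : ball (ce_one R) d l -> 0 <= t <= 1 ->
  ball (ce_one R) d (1 + t * (l.1 - 1), 0 + t * l.2).
Proof.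
move=> /ball_ce_oneP [h1 h2] /andP [t0 t1]; apply/ball_ce_oneP => /=.
have -> : 1 - (1 + t * (l.1 - 1)) = t * (1 - l.1) by ring.
have -> : 0 - (0 + t * l.2) = t * (0 - l.2) by ring.
rewrite !normrM (ger0_norm t0).
have n1 := normr_ge0 (1 - l.1); have n2 := normr_ge0 (0 - l.2).
split; nra.
Qed.


Definition seg_re (c : Ce R) (t : R) := 1 + t * c.1.
Definition seg_im (c : Ce R) (t : R) := 0 + t * c.2.
Definition seg_norm (c : Ce R) (t : R) :=
  seg_re c t * seg_re c t - eps * (seg_im c t * seg_im c t).

(* The real and i_eps parts of [lambda_t^-1 * w_j(lambda_t z)] with [lambda_t = 1 + t c],
   written with [lambda^-1 = conj lambda / (lambda conj lambda)]. *)
Definition rescaled_re w z (c : Ce R) j (t : R) :=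
  (seg_re c t * re_coord j (w (t *: ce_smul eps c z + z))
   - eps * (seg_im c t * im_coord j (w (t *: ce_smul eps c z + z)))) * (seg_norm c t)^-1.
Definition rescaled_im w z (c : Ce R) j (t : R) :=
  (seg_re c t * im_coord j (w (t *: ce_smul eps c z + z))
   - seg_im c t * re_coord j (w (t *: ce_smul eps c z + z))) * (seg_norm c t)^-1.

Lemma is_derive_rescaled w z (c : Ce R) (t : R) j :
  let y := t *: ce_smul eps c z + z in
  differentiable w y -> (forall v, 'd w y (Jn eps v) = Jn eps ('d w y v)) ->
  'd w y y = w y -> seg_norm c t != 0 ->
  is_derive t 1 (rescaled_re w z c j) 0 /\ is_derive t 1 (rescaled_im w z c j) 0.
Proof.
move=> y dw HJ HE HN; set V0 := ce_smul eps c z.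
have [dre Ere] := diff_re_coord j dw; have [dim Eim] := diff_im_coord j dw.
have hP : is_derive t 1 (fun s : R => re_coord j (w (s *: V0 + z))) (re_coord j ('d w y V0)).
  by rewrite -Ere; exact: is_derive_line dre.
have hQ : is_derive t 1 (fun s : R => im_coord j (w (s *: V0 + z))) (im_coord j ('d w y V0)).
  by rewrite -Eim; exact: is_derive_line dim.
have hL1 : is_derive t 1 (seg_re c) c.1 := is_derive_affine 1 c.1 t.
have hL2 : is_derive t 1 (seg_im c) c.2 := is_derive_affine 0 c.2 t.
have hV := is_deriveV HN (is_derive_sub (is_derive_mul hL1 hL1)
  (is_derive_scale eps (is_derive_mul hL2 hL2))).
have dV0 : 'd w y V0 = ce_smul eps c ('d w y z) by rewrite /V0 Jn_linear_smul.
have wy : w y = ce_smul eps (1 + t * c.1, 0 + t * c.2) ('d w y z).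
  have ey : y = ce_smul eps (1 + t * c.1, 0 + t * c.2) z.
    by rewrite ce_smul_segment -surjective_pairing.
  by rewrite -HE; transitivity ('d w y (ce_smul eps (1 + t * c.1, 0 + t * c.2) z));
    [rewrite -ey | rewrite Jn_linear_smul].
move: HN; rewrite /seg_norm /seg_re /seg_im add0r => HN.
split.
  apply: (is_derive_eq (is_derive_mul (is_derive_sub (is_derive_mul hL1 hP)
    (is_derive_scale eps (is_derive_mul hL2 hQ))) hV)).
  rewrite /seg_norm /seg_re /seg_im -/y dV0 wy !re_coord_smul !im_coord_smul /=.
  by rewrite -[_ *: _]/(_ * _); field; exact: HN.
apply: (is_derive_eq (is_derive_mul (is_derive_sub (is_derive_mul hL1 hQ)
  (is_derive_mul hL2 hP)) hV)).
rewrite /seg_norm /seg_re /seg_im -/y dV0 wy !re_coord_smul !im_coord_smul /=.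
by rewrite -[_ *: _]/(_ * _); field; exact: HN.
Qed.

Lemma ce_eq_mul_of_conj_div (l1 l2 p q a b : R) : l1 * l1 - eps * (l2 * l2) != 0 ->
  (l1 * p - eps * (l2 * q)) / (l1 * l1 - eps * (l2 * l2)) = a ->
  (l1 * q - l2 * p) / (l1 * l1 - eps * (l2 * l2)) = b ->
  p = l1 * a + eps * l2 * b /\ q = l1 * b + l2 * a.
Proof. by move=> N0 <- <-; split; field. Qed.

Lemma homogeneous1_of_conical Ut w z : open Ut ->
  (forall y, Ut y -> [/\ differentiable w y,
      (forall v, 'd w y (Jn eps v) = Jn eps ('d w y v)) & 'd w y y = w y]) ->
  Ut z -> exists W : set (Ce R), nbhs (ce_one R) W /\
    forall l, W l -> Ut (ce_smul eps l z) /\ w (ce_smul eps l z) = ce_smul eps l (w z).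
Proof.
move=> oU Hw Uz.
have nU : nbhs (ce_smul eps (ce_one R) z) Ut.
  by rewrite ce_smul_one; apply: open_nbhs_nbhs; split.
have /nbhs_ballP [d d0 Hd] := continuous_ce_smul nU.
(* radius 1/2 keeps every lambda invertible, see [ce_norm_gt0] *)
pose e := Num.min d (1/2).
have e0 : 0 < e by rewrite lt_min d0 divr_gt0.
have Hb m : ball (ce_one R) e m -> Ut (ce_smul eps m z) /\ 0 < m.1 * m.1 - eps * (m.2 * m.2).
  move=> Hm; split.
    by apply: Hd; apply: (le_ball _ Hm); rewrite ge_min lexx.
  by apply: ce_norm_gt0; apply: (le_ball _ Hm); rewrite ge_min lexx orbT.
exists (ball (ce_one R) e); split; first exact: nbhsx_ballx.
move=> l Hl; split; first by have [] := Hb l Hl.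
pose c := (l.1 - 1, l.2).
have const_on_segment j : rescaled_re w z c j 1 = rescaled_re w z c j 0 /\
    rescaled_im w z c j 1 = rescaled_im w z c j 0.
  split; apply: is_derive0_segment => t t01;
    have [Ut' HN] := Hb _ (ball_ce_one_segment Hl t01); rewrite ce_smul_segment in Ut';
    have [dw HJ HE] := Hw _ Ut';
    by have [] := is_derive_rescaled j dw HJ HE (lt0r_neq0 HN).
have at1 : 1 *: ce_smul eps c z + z = ce_smul eps l z.
  by rewrite -ce_smul_segment; congr ce_smul; rewrite [RHS]surjective_pairing /=; congr pair; ring.
have at0 : 0 *: ce_smul eps c z + z = z by rewrite scale0r add0r.
have Nl : l.1 * l.1 - eps * (l.2 * l.2) != 0 by have [_ ?] := Hb l Hl; exact: lt0r_neq0.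
have seg1_re : 1 + 1 * (l.1 - 1) = l.1 by ring.
have seg1_im : 0 + 1 * l.2 = l.2 by ring.
have seg0_re : 1 + 0 * (l.1 - 1) = 1 by ring.
have seg0_im : 0 + 0 * l.2 = 0 by ring.
have norm_seg0 : 1 * 1 - eps * (0 * 0) = 1 :> R by ring.
apply: coord_inj => j; have [] := const_on_segment j.
rewrite /rescaled_re /rescaled_im /seg_norm /seg_re /seg_im at1 at0 /=.
rewrite seg1_re seg1_im seg0_re seg0_im norm_seg0.
rewrite invr1 !mulr1 !mul1r !mul0r mulr0 !subr0 => A B.
rewrite coord_smul !coordE; have [-> ->] := ce_eq_mul_of_conj_div Nl A B.
by rewrite /ce_mul /= mulrA.
Qed.

End HomogeneityOfTheDualCoordinates.

Section EulerPrepotential.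
Variables (R : realType) (eps : R) (n : nat).
Implicit Types (Ut : set (Cn R n)) (w : Cn R n -> Cn R n).

Definition euler_prepotential w (y : Cn R n) : Ce R := 2^-1 *: zdotw eps w y.

Lemma diff_euler_prepotential w y : differentiable w y ->
  differentiable (euler_prepotential w) y /\
  forall v, 'd (euler_prepotential w) y v = 2^-1 *: 'd (zdotw eps w) y v.
Proof.
move=> dw; have dG := (diff_zdotw eps dw).1.
have dF : differentiable (euler_prepotential w) y by exact: differentiableZ.
split => // v; apply: is_derive_unique (is_derive_diff v dF) _.
exact: (is_deriveZ (f := zdotw eps w) (2^-1) (is_derive_diff v dG)).
Qed.

Lemma conical_graph_diff Ut w z :
  holomorphic_immersion eps Ut (graph w) -> conical Ut (graph w) -> Ut z -> 'd w z z = w z.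
Proof.
move=> Hi Hc Uz; have [_ Eg _] := holomorphic_graph_diff Hi Uz.
by have [v] := Hc z Uz; rewrite Eg /graph => -[->].
Qed.

Lemma euler_prepotential_prepotential Ut w :
  holomorphic_immersion eps Ut (graph w) -> Lagrangian eps Ut (graph w) ->
  conical Ut (graph w) -> prepotential eps Ut w (euler_prepotential w).
Proof.
move=> Hi HL Hc; split => y Uy; have [dw _ HJ] := holomorphic_graph_diff Hi Uy;
  have [dF dFE] := diff_euler_prepotential dw.
  split => // v; rewrite [LHS]dFE [in RHS]dFE !(diff_zdotw eps dw).2 HJ cdotJl cdotJr.
  by rewrite !ce_addE !ce_scaleE /J1 /ce_mul /=; congr pair; ring.
move=> j; rewrite dFE (diff_zdotw_ebasis _ Hi HL Uy) (conical_graph_diff Hi Hc Uy).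
by rewrite ce_addE ce_scaleE [RHS]surjective_pairing /=; congr pair; field.
Qed.

Lemma euler_prepotential_homogeneous Ut w : eps = 1 \/ eps = -1 -> open Ut ->
  holomorphic_immersion eps Ut (graph w) -> conical Ut (graph w) ->
  homogeneous eps Ut 2 (euler_prepotential w).
Proof.
move=> eps_unit oU Hi Hc z Uz.
have Hw y : Ut y -> [/\ differentiable w y,
    (forall v, 'd w y (Jn eps v) = Jn eps ('d w y v)) & 'd w y y = w y].
  by move=> Uy; have [dw _ HJ] := holomorphic_graph_diff Hi Uy; split => //;
    exact: conical_graph_diff Hi Hc Uy.
have [W [HW HWh]] := homogeneous1_of_conical eps_unit oU Hw Uz.
exists W; split => // l Wl; have [Ul El] := HWh l Wl; split => //.
rewrite /euler_prepotential /zdotw El cdot_smul.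
by rewrite !ce_scaleE /ce_mul /=; congr pair; ring.
Qed.

End EulerPrepotential.

Unset Implicit Arguments.
Set Strict Implicit.

Theorem mainTheorem5 (R : realType) (eps : R) (n : nat)
  (Ut : set (Cn R n)) (w : Cn R n -> Cn R n) (F : Cn R n -> Ce R) :
  (eps = 1 \/ eps = -1) ->
  open Ut -> connected Ut ->
  holomorphic_immersion eps Ut (graph w) ->
  eps_Kaehlerian eps Ut (graph w) ->
  Lagrangian eps Ut (graph w) ->
  prepotential eps Ut w F ->
  (exists F' : Cn R n -> Ce R,
      prepotential eps Ut w F' /\ homogeneous eps Ut 2 F')
  <-> conical Ut (graph w).
Proof.
move=> eps_unit oU _ Hi _ HL _; split.
  by move=> [F' [HF' Hh]]; exact: conical_of_homogeneous_prepotential oU Hi HL HF' Hh.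
move=> Hc; exists (euler_prepotential eps w); split.
  exact: euler_prepotential_prepotential Hi HL Hc.
exact: euler_prepotential_homogeneous eps_unit oU Hi Hc.
Qed.
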